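(* Let $\epsilon\in(0,1)$ and $q\in\mathbb N$. Let $\xi$ be a detailing of $\mu$ with respect to a finite set $A$, let $\eta$ be a distribution over $A\times B$ ($B$ finite) with $\eta|_1=\xi|_2$, let $H:[n]\to([0,1]^{A\times B})^2$ satisfy $(H(i))_1(a,b)=\Pr_{x\sim\xi|_1^{2:a}}[x_i=1]$ for all $i$ and all $(a,b)$ with $\eta(a,b)>0$, and let $\Xi$ be the output distribution of Change-types$(\xi,\eta,H)$. If $\xi$ is $(\epsilon,q)$-good, then the detailing $\Xi|_{2,3}$ of $\tau=\Xi|_2$ (with respect to $A\times B$) is also $(\epsilon,q)$-good.
   Context: Change-types$(\xi,\eta,H)$ outputs a sample $(x,y,(a,b))$ of a distribution $\Xi$ over $\{0,1\}^n\times\{0,1\}^n\times(A\times B)$: draw $(x,a)\sim\xi$ and then $b\sim\eta|_2^{1:a}$; then independently for each $i\in[n]$, with $h_1=(H(i))_1(a,b)$, $h_2=(H(i))_2(a,b)$: if $x_i=1$, set $y_i=0$ with probability $\max\{0,(h_1-h_2)/h_1\}$ and $y_i=1$ otherwise; if $x_i=0$, set $y_i=1$ with probability $\max\{0,(h_2-h_1)/(1-h_1)\}$ and $y_i=0$ otherwise (zero-denominator cases have probability zero). A detailing of $\mu$ w.r.t. a finite set $C$ is a distribution $\zeta$ on $\{0,1\}^n\times C$ with first marginal $\mu$; $\zeta|_1^{2:c}$ is the conditional first coordinate given second coordinate $c$. For a distribution $\nu$ over $\{0,1\}^n$, a $q$-tuple $(j_1,\dots,j_q)$ of distinct indices is $\epsilon$-independent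 w.r.t. $\nu$ if $d_{TV}(\nu|_{\{j_1,\dots,j_q\}},\prod_{\ell}\nu|_{j_\ell})\le\epsilon$; $\nu$ is $(\epsilon,q)$-good if at least a $1-\epsilon$ fraction of $q$-tuples of distinct indices are $\epsilon$-independent; the detailing $\zeta$ is $(\epsilon,q)$-good if there is $J\subseteq C$ with $\zeta|_2(J)\ge1-\epsilon$ and $\zeta|_1^{2:c}$ $(\epsilon,q)$-good for all $c\in J$. *)

From mathcomp Require Import all_boot all_order all_algebra.
From mathcomp Require Import reals.
Set Implicit Arguments. Unset Strict Implicit. Unset Printing Implicit Defensive.
Import Order.TTheory GRing.Theory Num.Theory.
Local Open Scope ring_scope.

Section Defs.
Variable R : realType.

Definition cube (n : nat) := {ffun 'I_n -> bool}.

Definition is_dist (T : finType) (p : T -> R) : Prop :=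
  (forall t, 0 <= p t) /\ \sum_t p t = 1.

Definition marg1 (T C : finType) (z : T * C -> R) (t : T) : R := \sum_(c : C) z (t, c).
Definition marg2 (T C : finType) (z : T * C -> R) (c : C) : R := \sum_(t : T) z (t, c).

(* zeta|_1^{2:c} : conditional law of the first coordinate given the second is c
   (only meaningful when marg2 z c > 0; set to 0 otherwise). *)
Definition cond1 (T C : finType) (z : T * C -> R) (c : C) (t : T) : R :=
  if marg2 z c == 0 then 0 else z (t, c) / marg2 z c.

Definition cond2 (T C : finType) (z : T * C -> R) (t : T) (c : C) : R :=
  if marg1 z t == 0 then 0 else z (t, c) / marg1 z t.

Definition marg_tuple (n q : nat) (nu : cube n -> R) (j : {ffun 'I_q -> 'I_n})
  (z : cube q) : R :=
  \sum_(x : cube n | [forall l, x (j l) == z l]) nu x.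

Definition marg_coord (n : nat) (nu : cube n -> R) (i : 'I_n) (b : bool) : R :=
  \sum_(x : cube n | x i == b) nu x.

Definition prod_marg (n q : nat) (nu : cube n -> R) (j : {ffun 'I_q -> 'I_n})
  (z : cube q) : R :=
  \prod_(l < q) marg_coord nu (j l) (z l).

Definition dTV (T : finType) (p p' : T -> R) : R :=
  (\sum_t `|p t - p' t|) / 2.

Definition eps_indep (n q : nat) (eps : R) (nu : cube n -> R)
  (j : {ffun 'I_q -> 'I_n}) : bool :=
  dTV (marg_tuple nu j) (prod_marg nu j) <= eps.

Definition good_dist (n q : nat) (eps : R) (nu : cube n -> R) : Prop :=
  (1 - eps) * (#|[set j : {ffun 'I_q -> 'I_n} | injectiveb j]|)%:R
    <= (#|[set j : {ffun 'I_q -> 'I_n} | injectiveb j && eps_indep eps nu j]|)%:R.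

Definition good_detailing (n q : nat) (C : finType) (eps : R)
  (zeta : cube n * C -> R) : Prop :=
  exists J : {set C},
    1 - eps <= \sum_(c in J) marg2 zeta c /\
    forall c, c \in J -> 0 < marg2 zeta c /\ good_dist q eps (cond1 zeta c).

(* Transition probability P[y_i = yb | x_i = xb] in Change-types, given h1, h2. *)
Definition trans (h1 h2 : R) (xb yb : bool) : R :=
  if xb then
    let p0 := if h1 == 0 then 0 else Num.max 0 ((h1 - h2) / h1) in
    if yb then 1 - p0 else p0
  else
    let p1 := if h1 == 1 then 0 else Num.max 0 ((h2 - h1) / (1 - h1)) in
    if yb then p1 else 1 - p1.

Definition change_types (n : nat) (A B : finType) (xi : cube n * A -> R)
  (eta : A * B -> R) (H : 'I_n -> ((A * B -> R) * (A * B -> R)))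
  (w : cube n * cube n * (A * B)) : R :=
  let: (x, y, (a, b)) := w in
  xi (x, a) * cond2 eta a b *
  \prod_(i < n) trans ((H i).1 (a, b)) ((H i).2 (a, b)) (x i) (y i).

Definition marg23 (n : nat) (C : finType) (Xi : cube n * cube n * C -> R)
  (w : cube n * C) : R :=
  \sum_(x : cube n) Xi (x, w.1, w.2).

End Defs.

From mathcomp Require Import all_boot all_order all_algebra.
From mathcomp Require Import reals.
Set Implicit Arguments. Unset Strict Implicit. Unset Printing Implicit Defensive.
Import Order.TTheory GRing.Theory Num.Theory.
Local Open Scope ring_scope.

(* Given its new type (a, b), Change-types resamples each coordinate of
   x ~ xi|_1^{2:a} independently through the two-state Markov kernel [trans],
   so the law of y given (a, b) is the image of xi|_1^{2:a} under a product
   kernel.  For an injective tuple j, such a kernel sends both the joint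
   marginal on j and the product of the one-coordinate marginals through one
   and the same product kernel on {0,1}^q, and total variation does not
   increase under a Markov kernel: eps-independent tuples stay eps-independent.
   The types (a, b) of positive probability with a good for xi carry the whole
   mass of the good a's.  Neither the bounds on eps nor the value of (H i).1 is
   needed. *)

Section FiniteSums.
Variable R : realType.

Definition push_kernel (T U : finType) (P : T -> R) (L : T -> U -> R) (u : U) : R :=
  \sum_t P t * L t u.

Lemma dTV_push_kernel (T U : finType) (P Q : T -> R) (L : T -> U -> R) :
  (forall t u, 0 <= L t u) -> (forall t, \sum_u L t u = 1) ->
  dTV (push_kernel P L) (push_kernel Q L) <= dTV P Q.
Proof.
move=> L_ge0 L_sum1; rewrite /dTV ler_wpM2r ?invr_ge0 ?ler0n //.
apply: (@le_trans _ _ (\sum_u \sum_t `|P t - Q t| * L t u)).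
  apply: ler_sum => u _; rewrite /push_kernel -sumrB.
  apply: (le_trans (ler_norm_sum _ _ _)); apply: ler_sum => t _.
  by rewrite -mulrBl normrM (ger0_norm (L_ge0 t u)).
rewrite exchange_big /=; apply: ler_sum => t _.
by rewrite -mulr_sumr L_sum1 mulr1.
Qed.

Lemma sum_fiber (T U : finType) (p : T -> U) (F : T -> U -> R) :
  \sum_t F t (p t) = \sum_u \sum_(t | p t == u) F t u.
Proof.
rewrite (partition_big p xpredT) //=; apply: eq_bigr => u _.
by apply: eq_big => // t /eqP ->.
Qed.

Lemma sum_positive_part (T : finType) (P : pred T) (F : T -> R) :
  (forall t, 0 <= F t) ->
  \sum_(t in [set t | P t && (0 < F t)]) F t = \sum_(t | P t) F t.
Proof.
move=> F_ge0; rewrite [RHS](bigID (fun t => 0 < F t)) /= [X in _ + X]big1 ?addr0.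
  by apply: eq_bigl => t; rewrite inE.
by move=> t /andP[_]; rewrite lt_def F_ge0 andbT negbK => /eqP.
Qed.

End FiniteSums.

Section ProductKernel.
Variables (R : realType) (n : nat) (k : 'I_n -> bool -> bool -> R).
Hypothesis k_ge0 : forall i b b', 0 <= k i b b'.
Hypothesis sum_k : forall i b, \sum_b' k i b b' = 1.

Definition prod_kernel (x y : cube n) : R := \prod_i k i (x i) (y i).

Lemma prod_kernel_ge0 x y : 0 <= prod_kernel x y.
Proof. exact: prodr_ge0. Qed.

Lemma sum_prod_kernel x : \sum_y prod_kernel x y = 1.
Proof.
rewrite /prod_kernel /cube -(bigA_distr_bigA (fun i b => k i (x i) b)) /=.
exact: big1.
Qed.

Lemma sum_prod_kernel_coords (L : finType) (j : L -> 'I_n) (z : L -> bool) x :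
  injective j ->
  \sum_(y : cube n | [forall l, y (j l) == z l]) prod_kernel x y
  = \prod_l k (j l) (x (j l)) (z l).
Proof.
move=> j_inj.
(* The constraint on y is a product of constraints y i \in Q i. *)
pose Q i := [pred b | [forall l, (j l == i) ==> (b == z l)]].
have Q_jE l b : (b \in Q (j l)) = (b == z l).
  rewrite inE; apply/forallP/eqP => [/(_ l)|-> l']; first by rewrite eqxx => /eqP.
  by apply/implyP => /eqP /j_inj ->.
rewrite (eq_bigl (fun y => y \in family Q)); last first.
  move=> y; apply/forallP/familyP => [y_z i|y_Q l]; last by rewrite -Q_jE.
  by apply/forallP => l; apply/implyP => /eqP <-; rewrite y_z.
rewrite /prod_kernel /cube -(bigA_distr_big_dep _ (fun i b => k i (x i) b)).
rewrite (bigID (mem (j @: [set: L]))) /=.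
rewrite [X in _ * X]big1 ?mulr1 => [|i i_notin]; last first.
  rewrite -[RHS](sum_k i (x i)); apply: eq_bigl => b.
  apply/forallP => l; apply/implyP => /eqP ji; case/imsetP: i_notin.
  by exists l; rewrite ?inE.
rewrite big_imset /=; last by move=> l l' _ _; exact: j_inj.
apply: eq_big => [l|l _]; first by rewrite inE.
by rewrite (eq_bigl (pred1 (z l))) ?big_pred1_eq // => b; exact: Q_jE.
Qed.

End ProductKernel.

Section GoodnessTransfer.
Variables (R : realType) (n : nat) (k : 'I_n -> bool -> bool -> R).
Hypothesis k_ge0 : forall i b b', 0 <= k i b b'.
Hypothesis sum_k : forall i b, \sum_b' k i b b' = 1.
Variables nu nu' : cube n -> R.
Hypothesis nu'E : nu' =1 push_kernel nu (prod_kernel k).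
Local Notation coord_kernel j := (prod_kernel (fun l => k (j l))).

Lemma marg_coord_push i b :
  marg_coord nu' i b = push_kernel (marg_coord nu i) (k i) b.
Proof.
rewrite /marg_coord /push_kernel; under eq_bigr do rewrite nu'E.
transitivity (\sum_x nu x * \sum_(y : cube n | y i == b) prod_kernel k x y).
  by rewrite exchange_big /=; apply: eq_bigr => x _; rewrite mulr_sumr.
transitivity (\sum_x nu x * k i (x i) b).
  apply: eq_bigr => x _; congr (_ * _).
  rewrite (eq_bigl (fun y : cube n => [forall l : 'I_1, y i == b])); last first.
    by move=> y; apply/idP/forallP => [y_b l|/(_ ord0)].
  rewrite (sum_prod_kernel_coords sum_k (j := fun _ : 'I_1 => i) (fun _ => b)).
    by rewrite big_ord1.
  by move=> l l' _; rewrite !ord1.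
rewrite (sum_fiber (fun x : cube n => x i) (fun x b' => nu x * k i b' b)) /=.
by apply: eq_bigr => b' _; rewrite mulr_suml.
Qed.

Lemma marg_tuple_push q (j : {ffun 'I_q -> 'I_n}) (z : cube q) : injective j ->
  marg_tuple nu' j z = push_kernel (marg_tuple nu j) (coord_kernel j) z.
Proof.
move=> j_inj; rewrite /marg_tuple /push_kernel; under eq_bigr do rewrite nu'E.
transitivity (\sum_x nu x *
    \sum_(y : cube n | [forall l, y (j l) == z l]) prod_kernel k x y).
  by rewrite exchange_big /=; apply: eq_bigr => x _; rewrite mulr_sumr.
transitivity (\sum_x nu x * coord_kernel j [ffun l => x (j l)] z).
  apply: eq_bigr => x _; rewrite (sum_prod_kernel_coords sum_k) //; congr (_ * _).
  by apply: eq_bigr => l _; rewrite ffunE.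
rewrite (sum_fiber (fun x : cube n => [ffun l => x (j l)] : cube q)
           (fun x w => nu x * coord_kernel j w z)) /=.
apply: eq_bigr => w _; rewrite mulr_suml; apply: eq_bigl => x.
apply/eqP/forallP => [<- l|x_w]; first by rewrite ffunE.
by apply/ffunP => l; rewrite ffunE; apply/eqP.
Qed.

Lemma prod_marg_push q (j : {ffun 'I_q -> 'I_n}) (z : cube q) :
  prod_marg nu' j z = push_kernel (prod_marg nu j) (coord_kernel j) z.
Proof.
rewrite /prod_marg; under eq_bigr do rewrite marg_coord_push.
rewrite bigA_distr_bigA /=; apply: eq_bigr => w _.
by rewrite /prod_kernel -big_split.
Qed.

Lemma eps_indep_push q eps (j : {ffun 'I_q -> 'I_n}) : injectiveb j ->
  eps_indep eps nu j -> eps_indep eps nu' j.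
Proof.
move=> /injectiveP j_inj; rewrite /eps_indep; apply: le_trans.
have -> : dTV (marg_tuple nu' j) (prod_marg nu' j) =
    dTV (push_kernel (marg_tuple nu j) (coord_kernel j))
        (push_kernel (prod_marg nu j) (coord_kernel j)).
  by congr (_ / _); apply: eq_bigr => z _; rewrite marg_tuple_push // prod_marg_push.
by apply: dTV_push_kernel => *; [exact: prod_kernel_ge0 | exact: sum_prod_kernel].
Qed.

Lemma good_dist_push q eps : good_dist q eps nu -> good_dist q eps nu'.
Proof.
move=> nu_good; apply: (le_trans nu_good); rewrite ler_nat.
apply/subset_leq_card/subsetP => j; rewrite !inE => /andP[j_inj j_indep].
by rewrite j_inj (eps_indep_push j_inj j_indep).
Qed.

End GoodnessTransfer.

Section ChangeTypes.
Variable R : realType.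

Lemma trans_ge0 (h1 h2 : R) xb yb : 0 <= h1 <= 1 -> 0 <= h2 <= 1 ->
  0 <= trans h1 h2 xb yb.
Proof.
move=> /andP[h1_ge0 h1_le1] /andP[h2_ge0 h2_le1].
rewrite /trans; case: xb; case: yb.
- case: eqP => [_|/eqP h1_neq0]; first by rewrite subr0.
  have h1_gt0 : 0 < h1 by rewrite lt_def h1_neq0 h1_ge0.
  by rewrite subr_ge0 ge_max ler01 ler_pdivrMr // mul1r lerBlDr lerDl.
- by case: eqP => // _; rewrite le_max lexx.
- by case: eqP => // _; rewrite le_max lexx.
- case: eqP => [_|/eqP h1_neq1]; first by rewrite subr0.
  have h1_lt1 : 0 < 1 - h1 by rewrite subr_gt0 lt_def eq_sym h1_neq1 h1_le1.
  by rewrite subr_ge0 ge_max ler01 ler_pdivrMr // mul1r lerB.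
Qed.

Lemma sum_trans (h1 h2 : R) xb : \sum_yb trans h1 h2 xb yb = 1.
Proof. by rewrite big_bool /trans; case: xb => /=; rewrite ?subrK // addrC subrK. Qed.

Variables (n : nat) (A B : finType) (xi : cube n * A -> R) (eta : A * B -> R).
Variable H : 'I_n -> ((A * B -> R) * (A * B -> R)).
Hypothesis xi_ge0 : forall xa, 0 <= xi xa.
Hypothesis eta_ge0 : forall ab, 0 <= eta ab.
Hypothesis H_range : forall i ab, 0 <= (H i).1 ab <= 1 /\ 0 <= (H i).2 ab <= 1.
Hypothesis eta_xi : marg1 eta = marg2 xi.

Definition type_kernel (ab : A * B) (i : 'I_n) : bool -> bool -> R :=
  trans ((H i).1 ab) ((H i).2 ab).

Lemma type_kernel_ge0 ab i b b' : 0 <= type_kernel ab i b b'.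
Proof. by have [? ?] := H_range i ab; exact: trans_ge0. Qed.

Lemma sum_type_kernel ab i b : \sum_b' type_kernel ab i b b' = 1.
Proof. exact: sum_trans. Qed.

Local Notation Xi := (marg23 (change_types xi eta H)).

Lemma marg23_change_types y a b : Xi (y, (a, b)) =
  cond2 eta a b * push_kernel (fun x => xi (x, a)) (prod_kernel (type_kernel (a, b))) y.
Proof.
by rewrite /push_kernel mulr_sumr; apply: eq_bigr => x _; rewrite mulrCA mulrA.
Qed.

Lemma cond2_ge0 a b : 0 <= cond2 eta a b.
Proof. by rewrite /cond2; case: ifP => // _; rewrite divr_ge0 ?sumr_ge0. Qed.

Lemma marg2_change_types a b : marg2 Xi (a, b) = marg2 xi a * cond2 eta a b.
Proof.
rewrite /marg2; under eq_bigr do rewrite marg23_change_types.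
rewrite -mulr_sumr mulrC /push_kernel exchange_big /=; congr (_ * _).
apply: eq_bigr => x _; rewrite -mulr_sumr sum_prod_kernel ?mulr1 //.
exact: sum_type_kernel.
Qed.

Lemma sum_marg2_change_types a : \sum_b marg2 Xi (a, b) = marg2 xi a.
Proof.
under eq_bigr do rewrite marg2_change_types.
rewrite -mulr_sumr /cond2 -eta_xi; case: eqP => [->|/eqP eta_a_neq0].
  by rewrite mul0r.
by rewrite -mulr_suml divff // mulr1.
Qed.

Lemma cond1_change_types a b : 0 < marg2 Xi (a, b) ->
  cond1 Xi (a, b) =1 push_kernel (cond1 xi a) (prod_kernel (type_kernel (a, b))).
Proof.
move=> + y; rewrite /cond1 marg2_change_types => /gt_eqF m_neq0; rewrite m_neq0.
have [xi_a_neq0 eta_ab_neq0] : marg2 xi a != 0 /\ cond2 eta a b != 0.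
  by apply/andP; rewrite -negb_or -mulf_eq0 m_neq0.
rewrite (negbTE xi_a_neq0) marg23_change_types /push_kernel mulrC invfM.
rewrite -mulrA mulKf // mulr_sumr; apply: eq_bigr => x _.
by rewrite mulrA [_^-1 * _]mulrC.
Qed.

Lemma marg2_change_types_ge0 c : 0 <= marg2 Xi c.
Proof.
by case: c => a b; rewrite marg2_change_types mulr_ge0 ?sumr_ge0 ?cond2_ge0.
Qed.

Lemma sum_marg2_change_types_on (J : {set A}) :
  \sum_(c | c.1 \in J) marg2 Xi c = \sum_(a in J) marg2 xi a.
Proof.
rewrite -(eq_bigr _ (fun a _ => sum_marg2_change_types a)) [RHS]pair_big_dep /=.
by apply: eq_big => [[a b]|[a b] _]; rewrite ?andbT.
Qed.

End ChangeTypes.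

Theorem lemma5p9 (R : realType) (eps : R) (q n : nat) (A B : finType)
  (mu : cube n -> R) (xi : cube n * A -> R) (eta : A * B -> R)
  (H : 'I_n -> ((A * B -> R) * (A * B -> R))) :
  0 < eps < 1 ->
  is_dist mu ->
  is_dist xi -> marg1 xi = mu ->
  is_dist eta -> marg1 eta = marg2 xi ->
  (forall i ab, 0 <= (H i).1 ab <= 1 /\ 0 <= (H i).2 ab <= 1) ->
  (forall i a b, 0 < eta (a, b) ->
     (H i).1 (a, b) = \sum_(x : cube n | x i) cond1 xi a x) ->
  good_detailing q eps xi ->
  good_detailing q eps (marg23 (change_types xi eta H)).
Proof.
move=> _ _ [xi_ge0 _] _ [eta_ge0 _] eta_xi H_range _ [J [J_mass J_good]].
set Xi := marg23 _.
exists [set c | (c.1 \in J) && (0 < marg2 Xi c)]; split.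
  rewrite sum_positive_part; last exact: marg2_change_types_ge0.
  by rewrite sum_marg2_change_types_on.
move=> -[a b]; rewrite inE /= => /andP[a_in_J Xi_ab_gt0]; split => //.
have [_ xi_a_good] := J_good a a_in_J.
exact: (good_dist_push (type_kernel_ge0 H_range (a, b)) (sum_type_kernel H (a, b))
          (cond1_change_types Xi_ab_gt0) xi_a_good).
Qed.
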